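(* Let $\Bbbk$ be a field of characteristic $0$, $n\ge2$, and let $(A,\mu)$ be an $n$-ary totally associative algebra over $\Bbbk$. Then $(A,[\cdot,\ldots,\cdot])$, where $[\cdot,\ldots,\cdot]$ is the $n$-commutator bracket of $\mu$, is an $n$-ary Nambu algebra, i.e. for all $x_1,\ldots,x_{n-1},y_1,\ldots,y_n\in A$, $[x_1,\ldots,x_{n-1},[y_1,\ldots,y_n]]=\sum_{i=1}^n[y_1,\ldots,y_{i-1},[x_1,\ldots,x_{n-1},y_i],y_{i+1},\ldots,y_n]$.
   Context: An $n$-ary algebra $(A,\mu)$ is a vector space with an $n$-linear map $\mu$, written $\mu(a_1,\ldots,a_n)=(a_1\cdots a_n)$. It is totally associative if for every $i\in\{1,\ldots,n-1\}$ and all $a_1,\ldots,a_{2n-1}$: $(a_1,\ldots,a_{i-1},(a_i\cdots a_{i+n-1}),a_{i+n},\ldots,a_{2n-1})=(a_1,\ldots,a_i,(a_{i+1}\cdots a_{i+n}),a_{i+n+1},\ldots,a_{2n-1})$. $n$-commutator words: in non-commuting variables $X_1,X_2,\ldots$, set $W_2=\{X_1X_2,-X_2X_1\}$ and for $n>2$, $W_n=\{zX_n,\,-X_nz : z\in W_{n-1}\}$. A word $w=\pm X_{i_1}\cdots X_{i_n}\in W_n$ acts by $w(a_1,\ldots,a_n)=\pm a_{i_1}\otimes\cdots\otimes a_{i_n}$. The $n$-commutator bracket is $[a_1,\ldots,a_n]=\sum_{w\in W_n}\mu(w(a_1,\ldots,a_n))$. *)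

From HB Require Import structures.
From mathcomp Require Import all_boot all_order all_algebra.
Set Implicit Arguments. Unset Strict Implicit. Unset Printing Implicit Defensive.
Import Order.TTheory GRing.Theory Num.Theory.
Local Open Scope ring_scope.

(* An n-ary operation on A is modelled as mu : seq A -> A, of which only the
   values on lists of length n are ever used. *)

Section Nary.
Variables (K : fieldType) (A : lmodType K).

Definition multilinear (n : nat) (mu : seq A -> A) : Prop :=
  forall (s1 s2 : seq A) (a : K) (x y : A),
    (size s1 + size s2).+1 = n ->
    mu (s1 ++ (a *: x + y) :: s2) = a *: mu (s1 ++ x :: s2) + mu (s1 ++ y :: s2).

Definition assoc_at (n : nat) (mu : seq A -> A) (j : nat) (s : seq A) : A :=
  mu (take j s ++ mu (take n (drop j s)) :: drop (j + n) s).

(* total associativity: for i in {1,...,n-1} (here j = i-1, 0-indexed) *)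
Definition totally_associative (n : nat) (mu : seq A -> A) : Prop :=
  forall s : seq A, size s = (2 * n).-1 ->
    forall j : nat, (j.+1 < n)%N -> assoc_at n mu j s = assoc_at n mu j.+1 s.

End Nary.

(* n-commutator words: (sign, indices), sign = true means minus; variables
   X_1, X_2, ... are represented by 0-based indices 0, 1, ... *)
Fixpoint cwords (m : nat) : seq (bool * seq nat) :=
  match m with
  | 0 => [::]
  | 1 => [::]
  | 2 => [:: (false, [:: 0%N; 1%N]); (true, [:: 1%N; 0%N])]
  | m'.+1 =>
      flatten [seq [:: (w.1, rcons w.2 m'); (~~ w.1, m' :: w.2)] | w <- cwords m']
  end.

Definition nbracket (K : fieldType) (A : lmodType K) (n : nat)
    (mu : seq A -> A) (xs : seq A) : A :=
  \sum_(w <- cwords n) ((-1) ^+ w.1 : K) *: mu [seq nth 0 xs i | i <- w.2].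

From HB Require Import structures.
From mathcomp Require Import all_boot all_order all_algebra.
From mathcomp Require Import boolp zify.
Set Implicit Arguments. Unset Strict Implicit. Unset Printing Implicit Defensive.
Import GRing.Theory.
Local Open Scope ring_scope.

(* Compute in an associative ring of formal words in the elements of A, in
   which the n-commutator is an iterated ring commutator.  There the
   bracket [x_1,...,x_{n-1},y] is the ordinary commutator [X,y] with X the
   (n-1)-commutator of the x's (X = x_1 if n = 2), and the Nambu identity is
   just the statement that ad X is a derivation.  Total associativity makes
   the evaluation of words well defined: an n-fold product sitting in any slot
   of mu gives the same element as the flat evaluation of the resulting word
   of length 2n-1, so the formal identity transfers to A. *)

Lemma set_nth_rcons (T : Type) (x0 : T) (s : seq T) z i y : (i < size s)%N ->
  set_nth x0 (rcons s z) i y = rcons (set_nth x0 s i y) z.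
Proof. by elim: s i => [|a s IHs] [|i] //= ltis; rewrite IHs. Qed.

Lemma set_nth_rcons_size (T : Type) (x0 : T) (s : seq T) z y :
  set_nth x0 (rcons s z) (size s) y = rcons s y.
Proof. by elim: s => [|a s IHs] //=; rewrite IHs. Qed.

Lemma map_nth_set_nth (T : Type) (x0 : T) (s : seq T) i y (p q : seq nat) :
  i \notin p -> i \notin q ->
  [seq nth x0 (set_nth x0 s i y) k | k <- p ++ i :: q] =
  [seq nth x0 s k | k <- p] ++ y :: [seq nth x0 s k | k <- q].
Proof.
have unchanged r :
    i \notin r -> [seq nth x0 (set_nth x0 s i y) k | k <- r] = [seq nth x0 s k | k <- r].
  move=> iNr; apply/eq_in_map => k kr; rewrite nth_set_nth /=.
  by case: eqP => // eki; rewrite -eki kr in iNr.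
by move=> iNp iNq; rewrite map_cat /= unchanged // unchanged // nth_set_nth /= eqxx.
Qed.

Lemma cwordsS m : (2 <= m)%N ->
  cwords m.+1 = flatten [seq [:: (w.1, rcons w.2 m); (~~ w.1, m :: w.2)] | w <- cwords m].
Proof. by case: m => [|[|m]]. Qed.

Lemma perm_cwords m w : (2 <= m)%N -> w \in cwords m -> perm_eq w.2 (iota 0 m).
Proof.
elim: m w => [|m IHm] w // m_gt1.
have [m_le1|m_gt1'] := ltnP m 2.
  have -> : m = 1%N by case: m m_gt1 m_le1 {IHm} => [|[|m]].
  by rewrite /= !inE => /orP [/eqP->|/eqP->].
rewrite cwordsS // => /flattenP [s /mapP [w0 w0_in ->]].
have w0_perm := IHm w0 m_gt1' w0_in.
rewrite -addn1 iotaD cats1 !inE => /orP [/eqP->|/eqP->] /=.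
  by rewrite -!cats1 perm_cat2r.
by rewrite perm_sym perm_rcons perm_cons perm_sym.
Qed.

Lemma uniq_split (T : eqType) (s : seq T) x : uniq s -> x \in s ->
  exists p q, [/\ s = p ++ x :: q, x \notin p & x \notin q].
Proof.
move=> s_uniq x_s; move: s_uniq; case/splitPr: x_s => p q s_uniq; exists p, q.
by move: s_uniq; rewrite cat_uniq /= negb_or => /and4P [_ /andP [xNp _] xNq _].
Qed.

Section IteratedCommutator.
Variable R : pzRingType.

Definition ad (x a : R) := x * a - a * x.

Lemma adM x a b : ad x (a * b) = ad x a * b + a * ad x b.
Proof. by rewrite /ad mulrBl mulrBr !mulrA addrA subrK. Qed.

Lemma adB x a b : ad x (a - b) = ad x a - ad x b.
Proof. by rewrite /ad mulrBr mulrBl !opprB addrACA [RHS]addrACA [- (x * b) + _]addrC. Qed.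

Lemma ad_ad x a b : ad x (ad a b) = ad (ad x a) b + ad a (ad x b).
Proof. by rewrite [ad a b]/ad adB !adM opprD (addrC (- _)) addrACA. Qed.

Definition ncomm m (fs : seq R) : R :=
  \sum_(w <- cwords m) (-1) ^+ w.1 * \prod_(k <- w.2) fs`_k.

Lemma ncomm2 f g : ncomm 2 [:: f; g] = ad f g.
Proof.
by rewrite /ncomm /= !big_cons !big_nil /= expr0 expr1 !mulr1 mul1r mulN1r addr0.
Qed.

Lemma ncomm_rcons m fs g : (2 <= m)%N -> size fs = m ->
  ncomm m.+1 (rcons fs g) = ad (ncomm m fs) g.
Proof.
move=> m_gt1 size_fs; rewrite /ncomm /ad cwordsS // big_flatten /= big_map.
rewrite mulr_suml mulr_sumr -sumrB; apply: eq_big_seq => w w_in.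
rewrite !big_cons big_nil /= -cats1 big_cat /= big_seq1 addr0.
rewrite nth_rcons size_fs ltnn eqxx.
have -> : \prod_(k <- w.2) (rcons fs g)`_k = \prod_(k <- w.2) fs`_k.
  apply: eq_big_seq => k kw; rewrite nth_rcons size_fs.
  by rewrite (perm_mem (perm_cwords m_gt1 w_in)) mem_iota in kw; case/andP: kw => _ ->.
by rewrite signrN mulNr mulrA -(commr_sign g) !mulrA.
Qed.

Lemma ncomm_rcons_ad m fs : (2 <= m)%N -> size fs = m.-1 ->
  exists x, forall g, ncomm m (rcons fs g) = ad x g.
Proof.
case: m => [|[|[|m]]] // _ size_fs.
  by case: fs size_fs => [|f [|]] // _; exists f => g; rewrite ncomm2.
by exists (ncomm m.+2 fs) => g; rewrite ncomm_rcons.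
Qed.

Lemma ad_ncomm x m fs : (2 <= m)%N -> size fs = m ->
  ad x (ncomm m fs) = \sum_(i < m) ncomm m (set_nth 0 fs i (ad x fs`_i)).
Proof.
elim: m fs => [|m IHm] fs // m_gt1 size_fs.
have [m_le1|m_gt1'] := ltnP m 2.
  have m1 : m = 1%N by case: m m_gt1 m_le1 {IHm size_fs} => [|[|m]].
  subst m; case: fs size_fs => [|f [|g []]] // _.
  by rewrite !big_ord_recr big_ord0 /= add0r !ncomm2 ad_ad.
case/lastP: fs size_fs => [|fs g] //; rewrite size_rcons => -[size_fs].
rewrite ncomm_rcons // ad_ad IHm // big_ord_recr /=; congr (_ + _).
  rewrite /ad mulr_suml mulr_sumr -sumrB; apply: eq_bigr => i _.
  have lt_i : (i < size fs)%N by rewrite size_fs.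
  rewrite nth_rcons lt_i set_nth_rcons // ncomm_rcons //.
  by rewrite size_set_nth size_fs; apply/maxn_idPr.
rewrite nth_rcons size_fs ltnn eqxx.
have := set_nth_rcons_size 0 fs g (ad x g); rewrite size_fs => ->.
by rewrite ncomm_rcons.
Qed.

End IteratedCommutator.

Section WordFunctionals.
Variable A : zmodType.

(* A formal linear combination of words acts on evaluations F : seq A -> A of
   words, the word u acting as F |-> F u; multiplication is concatenation. *)
Record wordfun := Wordfun {
  wordfun_val :> (seq A -> A) -> A;
  wordfunD : forall F G, wordfun_val (fun u => F u + G u) = wordfun_val F + wordfun_val G
}.

Lemma wordfunP (f g : wordfun) : f =1 g -> f = g.
Proof.
case: f g => f fD [g gD] /= /funext fg; subst g.
by congr Wordfun; apply: Prop_irrelevance.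
Qed.

HB.instance Definition _ := gen_eqMixin wordfun.
HB.instance Definition _ := gen_choiceMixin wordfun.

Definition wordfun0 := @Wordfun (fun _ => 0) (fun _ _ => esym (addr0 0)).

Lemma wordfunN_subproof (f : wordfun) : forall F G,
  - f (fun u => F u + G u) = - f F + - f G.
Proof. by move=> F G; rewrite wordfunD opprD. Qed.
Definition wordfunN (f : wordfun) := Wordfun (wordfunN_subproof f).

Lemma wordfun_add_subproof (f g : wordfun) : forall F G,
  f (fun u => F u + G u) + g (fun u => F u + G u) = (f F + g F) + (f G + g G).
Proof. by move=> F G; rewrite !wordfunD addrACA. Qed.
Definition wordfun_add (f g : wordfun) := Wordfun (wordfun_add_subproof f g).

Lemma wordfun_addA : associative wordfun_add.
Proof. by move=> f g h; apply: wordfunP => F /=; rewrite addrA. Qed.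
Lemma wordfun_addC : commutative wordfun_add.
Proof. by move=> f g; apply: wordfunP => F /=; rewrite addrC. Qed.
Lemma wordfun_add0 : left_id wordfun0 wordfun_add.
Proof. by move=> f; apply: wordfunP => F /=; rewrite add0r. Qed.
Lemma wordfun_addN : left_inverse wordfun0 wordfunN wordfun_add.
Proof. by move=> f; apply: wordfunP => F /=; rewrite addNr. Qed.

HB.instance Definition _ :=
  GRing.isZmodule.Build wordfun wordfun_addA wordfun_addC wordfun_add0 wordfun_addN.

Definition wordfun1 := @Wordfun (fun F => F [::]) (fun _ _ => erefl).

Lemma wordfun_mul_subproof (f g : wordfun) : forall F G,
  f (fun u => g (fun v => F (u ++ v) + G (u ++ v))) =
  f (fun u => g (fun v => F (u ++ v))) + f (fun u => g (fun v => G (u ++ v))).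
Proof.
move=> F G; rewrite -wordfunD; congr (wordfun_val f _).
by apply: funext => u; rewrite wordfunD.
Qed.
Definition wordfun_mul (f g : wordfun) := Wordfun (wordfun_mul_subproof f g).

Lemma wordfun_mulA : associative wordfun_mul.
Proof.
move=> f g h; apply: wordfunP => F /=; congr (wordfun_val f _); apply: funext => u.
congr (wordfun_val g _); apply: funext => v; congr (wordfun_val h _).
by apply: funext => w; rewrite catA.
Qed.
Lemma wordfun_mul1 : left_id wordfun1 wordfun_mul.
Proof. by move=> f; apply: wordfunP. Qed.
Lemma wordfun_mulr1 : right_id wordfun1 wordfun_mul.
Proof.
move=> f; apply: wordfunP => F /=; congr (wordfun_val f _).
by apply: funext => u; rewrite cats0.
Qed.
Lemma wordfun_mulDl : left_distributive wordfun_mul wordfun_add.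
Proof. by move=> f g h; apply: wordfunP. Qed.
Lemma wordfun_mulDr : right_distributive wordfun_mul wordfun_add.
Proof. by move=> f g h; apply: wordfunP => F /=; rewrite -wordfunD. Qed.

HB.instance Definition _ := GRing.Zmodule_isPzRing.Build wordfun
  wordfun_mulA wordfun_mul1 wordfun_mulr1 wordfun_mulDl wordfun_mulDr.

Lemma wordfun_sumE (I : Type) (r : seq I) (P : pred I) (f : I -> wordfun) F :
  (\sum_(i <- r | P i) f i) F = \sum_(i <- r | P i) f i F.
Proof. by apply: (big_morph (fun g : wordfun => g F)). Qed.

Definition letter (a : A) := @Wordfun (fun F => F [:: a]) (fun _ _ => erefl).

Lemma prod_letters P F : (\prod_(g <- map letter P) g) F = F P.
Proof. by elim: P F => [|a P IHP] F; rewrite ?big_nil // big_cons /= IHP. Qed.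

Lemma prod_letters_plug P Q (Z : wordfun) F :
  (\prod_(g <- map letter P ++ Z :: map letter Q) g) F = Z (fun v => F (P ++ v ++ Q)).
Proof.
rewrite big_cat big_cons /= prod_letters; congr (wordfun_val Z _).
by apply: funext => u; rewrite prod_letters.
Qed.

End WordFunctionals.

Arguments letter {A}.

Section TotallyAssociative.
Variables (K : fieldType) (A : lmodType K).

Lemma wordfun_signE (b : bool) (p : wordfun A) F :
  ((-1) ^+ b * p) F = ((-1) ^+ b : K) *: p F.
Proof. by case: b; rewrite ?expr0 ?expr1 ?mul1r ?scale1r ?mulN1r ?scaleN1r. Qed.

Lemma ncomm_letters m (zs : seq A) F : (2 <= m)%N -> size zs = m ->
  ncomm m (map letter zs) F =
  \sum_(w <- cwords m) ((-1) ^+ w.1 : K) *: F [seq zs`_i | i <- w.2].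
Proof.
move=> m_gt1 size_zs; rewrite /ncomm wordfun_sumE; apply: eq_big_seq => w w_in.
rewrite wordfun_signE -[F _]prod_letters -map_comp big_map; congr (_ *: wordfun_val _ F).
apply: eq_big_seq => k kw; rewrite (nth_map 0) // size_zs.
by rewrite (perm_mem (perm_cwords m_gt1 w_in)) mem_iota in kw; case/andP: kw.
Qed.

Variables (n : nat) (mu : seq A -> A).
Hypothesis n_gt1 : (2 <= n)%N.

(* By total associativity, every way of inserting one n-fold product into
   another evaluates a word of length 2n-1 to this value ([mu_nested]). *)
Definition flat_mu (s : seq A) := mu (mu (take n s) :: drop n s).

Definition represents (C : A) (Z : wordfun A) :=
  forall P Q, (size P + size Q).+1 = n ->
    mu (P ++ C :: Q) = Z (fun v => flat_mu (P ++ v ++ Q)).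

Lemma nbracket_set_nth zs i C Z : size zs = n -> (i < n)%N -> represents C Z ->
  nbracket n mu (set_nth 0 zs i C) = ncomm n (set_nth 0 (map letter zs) i Z) flat_mu.
Proof.
move=> size_zs lt_in CZ; rewrite /ncomm wordfun_sumE; apply: eq_big_seq => w w_in.
rewrite wordfun_signE -(big_map _ xpredT id); congr (_ *: _).
have w_perm := perm_cwords n_gt1 w_in.
have w_uniq : uniq w.2 by rewrite (perm_uniq w_perm) iota_uniq.
have i_w : i \in w.2 by rewrite (perm_mem w_perm) mem_iota.
have [p [q [w_eq iNp iNq]]] := uniq_split w_uniq i_w.
have nth_letters r : {subset r <= w.2} ->
    [seq (map letter zs)`_k | k <- r] = map letter [seq zs`_k | k <- r].
  move=> rw; rewrite -map_comp; apply/eq_in_map => k /rw.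
  by rewrite (perm_mem w_perm) mem_iota => /andP [_ lt_kn]; rewrite (nth_map 0) ?size_zs.
have sub_p : {subset p <= w.2} by move=> k kp; rewrite w_eq mem_cat kp.
have sub_q : {subset q <= w.2} by move=> k kq; rewrite w_eq mem_cat inE kq !orbT.
rewrite w_eq !map_nth_set_nth // !nth_letters // prod_letters_plug CZ //.
by have := perm_size w_perm; rewrite w_eq size_iota size_cat /= !size_map addnS.
Qed.

Lemma nbracket_rcons xs C Z : size xs = n.-1 -> represents C Z ->
  nbracket n mu (rcons xs C) = ncomm n (rcons (map letter xs) Z) flat_mu.
Proof.
move=> size_xs CZ; rewrite -[rcons xs C](set_nth_rcons_size 0 _ 0).
rewrite -[rcons _ Z](set_nth_rcons_size 0 _ (letter 0)) size_map -map_rcons.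
by apply: nbracket_set_nth => //; rewrite ?size_rcons size_xs ?(prednK (ltnW n_gt1)).
Qed.

Hypotheses (mu_lin : multilinear n mu) (mu_assoc : totally_associative n mu).

Lemma multilinear_sum (I : Type) (r : seq I) (c : I -> K) (v : I -> A) P Q :
  (size P + size Q).+1 = n ->
  mu (P ++ (\sum_(i <- r) c i *: v i) :: Q) = \sum_(i <- r) c i *: mu (P ++ v i :: Q).
Proof.
move=> size_PQ; elim: r => [|i r IHr]; last by rewrite !big_cons mu_lin // IHr.
have := @mu_lin P Q 1 0 0 size_PQ; rewrite scaler0 addr0 scale1r !big_nil => mu0.
by apply: (@addrI _ (mu (P ++ 0 :: Q))); rewrite addr0 -mu0.
Qed.

Lemma assoc_at0 s j : size s = (2 * n).-1 -> (j < n)%N ->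
  assoc_at n mu j s = assoc_at n mu 0 s.
Proof.
move=> size_s; elim: j => [|j IHj] // lt_jn.
by rewrite -mu_assoc // IHj // ltnW.
Qed.

Lemma mu_nested P v Q : (size P + size Q).+1 = n -> size v = n ->
  mu (P ++ mu v :: Q) = flat_mu (P ++ v ++ Q).
Proof.
move=> size_PQ size_v.
have size_s : size (P ++ v ++ Q) = (2 * n).-1 by rewrite !size_cat; lia.
have lt_Pn : (size P < n)%N by lia.
have := assoc_at0 size_s lt_Pn; rewrite /assoc_at /flat_mu take0 drop0 add0n /= => <-.
rewrite take_size_cat // drop_size_cat // take_size_cat //.
by rewrite addnC -drop_drop drop_size_cat // -size_v drop_size_cat.
Qed.

Lemma represents_nbracket zs : size zs = n ->
  represents (nbracket n mu zs) (ncomm n (map letter zs)).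
Proof.
move=> size_zs P Q size_PQ; rewrite ncomm_letters // multilinear_sum //.
apply: eq_big_seq => w w_in; rewrite mu_nested //.
by rewrite size_map (perm_size (perm_cwords n_gt1 w_in)) size_iota.
Qed.

End TotallyAssociative.

Theorem corollary4p6 (K : fieldType) (A : lmodType K) (n : nat)
    (mu : seq A -> A) :
  [pchar K] =i pred0 ->
  (2 <= n)%N ->
  multilinear n mu ->
  totally_associative n mu ->
  forall xs ys : seq A, size xs = n.-1 -> size ys = n ->
    nbracket n mu (rcons xs (nbracket n mu ys)) =
    \sum_(i < n) nbracket n mu
        (set_nth 0 ys i (nbracket n mu (rcons xs (nth 0 ys i)))).
Proof.
move=> _ n_gt1 mu_lin mu_assoc xs ys size_xs size_ys.
have size_rcons_xs y : size (rcons xs y) = n.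
  by rewrite size_rcons size_xs (prednK (ltnW n_gt1)).
have [X adX] := ncomm_rcons_ad n_gt1 (etrans (size_map letter xs) size_xs).
have represents_ys := represents_nbracket n_gt1 mu_lin mu_assoc size_ys.
rewrite (nbracket_rcons n_gt1 size_xs represents_ys).
rewrite adX ad_ncomm ?size_map // wordfun_sumE; apply: eq_bigr => i _.
rewrite (nth_map 0) ?size_ys // -adX -map_rcons.
by rewrite (nbracket_set_nth n_gt1 size_ys _
  (represents_nbracket n_gt1 mu_lin mu_assoc (size_rcons_xs _))).
Qed.
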